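(* Let $(X,\mathcal A,\mu,\mu^{\otimes2},R,I,\Pi_R,G,E_0,\eta)$ be a pre-structural datum satisfying Axiom I. Assume $\{r\}\in\mathcal A$ and $F_r:=\Pi_R^{-1}(\{r\})\in\mathcal A$ for every $r\in R$, and that either (R-fin) $R$ is finite, or (R-ctbl) $R$ is countable, $\mathcal A$ is a $\sigma$-algebra and $\mu$ is $\sigma$-additive on $\mathcal A$. If $\mu(\Pi_R^{-1}(B))=\mu(B)$ for every $B\in\mathcal A$ with $B\subseteq R$, then $\mu(F_r\setminus\{r\})=0$ for every $r\in R$, and $\mu(X\setminus R)=0$.
   Context: A pre-structural datum is a tuple $(X,\mathcal A,\mu,\mu^{\otimes2},R,I,\Pi_R,G,E_0,\eta)$ where: $X$ is a nonempty set; $\mathcal A\subseteq\mathcal P(X)$ is an algebra of sets; $\mu:\mathcal A\to[0,\infty)$ is finitely additive with $\mu(\varnothing)=0$; $\mu^{\otimes2}$ is a finitely additive set function on the algebra generated by rectangles $B_1\times B_2$ ($B_i\in\mathcal A$) with $\mu^{\otimes2}(B_1\times B_2)=\mu(B_1)\mu(B_2)$; $R,I\in\mathcal A$ disjoint; $\Pi_R:X\to R$ a map; $G\subseteq X\times X$ in that product algebra; $E_0\in(0,\infty)$; $\eta\in[0,1]$. Axiom I: $\Pi_R\circ\Pi_R=\Pi_R$, $\Pi_R(r)=r$ for all $r\in R$, and $\Pi_R^{-1}(B)\in\mathcal A$ for every $B\in\mathcal A$ with $B\subseteq R$. *)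

From Stdlib Require Import Reals List.
Open Scope R_scope.

Definition set (T : Type) := T -> Prop.

Definition is_algebra {T : Type} (A : set (set T)) : Prop :=
  A (fun _ => False) /\
  (forall B, A B -> A (fun x => ~ B x)) /\
  (forall B C, A B -> A C -> A (fun x => B x \/ C x)).

Definition is_sigma_algebra {T : Type} (A : set (set T)) : Prop :=
  is_algebra A /\
  (forall Bs : nat -> set T, (forall n, A (Bs n)) ->
     A (fun x => exists n, Bs n x)).

Definition disjoint {T : Type} (B C : set T) : Prop :=
  forall x, B x -> C x -> False.

Definition finitely_additive {T : Type} (A : set (set T)) (mu : set T -> R) : Prop :=
  mu (fun _ => False) = 0 /\
  (forall B, A B -> 0 <= mu B) /\
  (forall B C, A B -> A C -> disjoint B C ->
     mu (fun x => B x \/ C x) = mu B + mu C).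

Definition sigma_additive {T : Type} (A : set (set T)) (mu : set T -> R) : Prop :=
  forall Bs : nat -> set T,
    (forall n, A (Bs n)) ->
    (forall m n, m <> n -> disjoint (Bs m) (Bs n)) ->
    A (fun x => exists n, Bs n x) ->
    infinite_sum (fun n => mu (Bs n)) (mu (fun x => exists n, Bs n x)).

Definition rectangle {T : Type} (B1 B2 : set T) : set (T * T) :=
  fun p => B1 (fst p) /\ B2 (snd p).

Definition product_algebra {T : Type} (A : set (set T)) : set (set (T * T)) :=
  fun C => forall S : set (set (T * T)), is_algebra S ->
    (forall B1 B2, A B1 -> A B2 -> S (rectangle B1 B2)) -> S C.

Definition preimage {T U : Type} (f : T -> U) (B : set U) : set T :=
  fun x => B (f x).

Definition pre_structural_datum {X : Type} (A : set (set X)) (mu : set X -> R)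
  (mu2 : set (X * X) -> R) (RR II : set X) (Pi : X -> X) (G : set (X * X))
  (E0 eta : R) : Prop :=
  inhabited X /\
  is_algebra A /\
  finitely_additive A mu /\
  finitely_additive (product_algebra A) mu2 /\
  (forall B1 B2, A B1 -> A B2 -> mu2 (rectangle B1 B2) = mu B1 * mu B2) /\
  A RR /\ A II /\ disjoint RR II /\
  (forall x, RR (Pi x)) /\
  product_algebra A G /\
  0 < E0 /\ 0 <= eta <= 1.

Definition axiom_I {X : Type} (A : set (set X)) (RR : set X) (Pi : X -> X) : Prop :=
  (forall x, Pi (Pi x) = Pi x) /\
  (forall r, RR r -> Pi r = r) /\
  (forall B, A B -> (forall x, B x -> RR x) -> A (preimage Pi B)).

Definition set_finite {T : Type} (B : set T) : Prop :=
  exists l : list T, forall x, B x <-> In x l.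

Definition set_countable {T : Type} (B : set T) : Prop :=
  exists f : nat -> T, forall x, B x -> exists n, f n = x.

(* Since [Pi] fixes [r], the fibre [F_r] is the disjoint union of [{r}] and
   [F_r \ {r}]; since [Pi] maps into [R], [X = Pi^-1(R)] is the disjoint union
   of [R] and [X \ R].  In both cases invariance of [mu] under [Pi] says that
   the whole has the measure of the second piece, so finite additivity forces
   the first piece to be null. *)
From Stdlib Require Import Reals List Lra Classical.
From Stdlib Require Import FunctionalExtensionality PropExtensionality.
Open Scope R_scope.

Lemma set_ext {T : Type} (P Q : set T) : (forall x, P x <-> Q x) -> P = Q.
Proof.
  intro PQ; apply functional_extensionality; intro x.
  now apply propositional_extensionality.
Qed.

Section FinitelyAdditive.

Context {T : Type} {A : set (set T)} {mu : set T -> R}.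
Hypothesis A_algebra : is_algebra A.
Hypothesis mu_additive : finitely_additive A mu.

Lemma algebra_setD (B C : set T) : A B -> A C -> A (fun x => B x /\ ~ C x).
Proof.
  destruct A_algebra as [_ [A_compl A_union]]; intros AB AC.
  replace (fun x => B x /\ ~ C x) with (fun x => ~ (~ B x \/ C x)).
  - apply A_compl, A_union; [apply A_compl|]; assumption.
  - apply set_ext; intro x; split.
    + intro H; apply not_or_and in H as [nnB nC]; split; [apply NNPP|]; assumption.
    + intros [Bx nCx] [nBx|Cx]; auto.
Qed.

Lemma null_of_cover_eq (B C D : set T) :
  A B -> A C -> disjoint B C -> (forall x, D x <-> B x \/ C x) ->
  mu D = mu C -> mu B = 0.
Proof.
  destruct mu_additive as [_ [_ mu_union]]; intros AB AC BC D_cover muD.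
  rewrite (set_ext _ _ D_cover), mu_union in muD by assumption.
  lra.
Qed.

End FinitelyAdditive.

Theorem proposition8p15 (X : Type) (A : set (set X)) (mu : set X -> R)
  (mu2 : set (X * X) -> R) (RR II : set X) (Pi : X -> X) (G : set (X * X))
  (E0 eta : R) :
  pre_structural_datum A mu mu2 RR II Pi G E0 eta ->
  axiom_I A RR Pi ->
  (forall r, RR r -> A (fun x => x = r)) ->
  (forall r, RR r -> A (preimage Pi (fun x => x = r))) ->
  (set_finite RR \/
   (set_countable RR /\ is_sigma_algebra A /\ sigma_additive A mu)) ->
  (forall B, A B -> (forall x, B x -> RR x) -> mu (preimage Pi B) = mu B) ->
  (forall r, RR r -> mu (fun x => preimage Pi (fun y => y = r) x /\ x <> r) = 0) /\
  mu (fun x => ~ RR x) = 0.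
Proof.
  intros [_ [A_algebra [mu_additive [_ [_ [A_R [_ [_ [Pi_R _]]]]]]]]]
         [_ [Pi_fix _]] A_point A_fibre _ mu_Pi.
  split.
  - intros r Rr.
    apply (null_of_cover_eq mu_additive)
      with (C := fun x => x = r) (D := preimage Pi (fun y => y = r)).
    + exact (algebra_setD A_algebra _ _ (A_fibre r Rr) (A_point r Rr)).
    + now apply A_point.
    + now intros x [_ xr] ->.
    + intro x; unfold preimage; split.
      * intro Pix; destruct (classic (x = r)); auto.
      * intros [[Pix _] | ->]; auto.
    + apply mu_Pi; [now apply A_point | now intros x ->].
  - apply (null_of_cover_eq mu_additive)
      with (C := RR) (D := preimage Pi RR).
    + now apply A_algebra.
    + exact A_R.
    + now intros x nRx Rx.
    + intro x; unfold preimage; split; [intros _; tauto | intros _; apply Pi_R].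
    + now apply mu_Pi.
Qed.
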